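(* Let $n\ge 2$ and $\alpha_1,\dots,\alpha_n\in\mathbb{R}$. (a) Let $D$ be the $n\times n$ Euclidean distance matrix of the points $\alpha_1\mathbf{e}_1,\dots,\alpha_n\mathbf{e}_n\in\mathbb{R}^n$ (an axis simplex), i.e. $D_{ij}=\sqrt{\alpha_i^2+\alpha_j^2}$ for $i\neq j$. (b) Let $D'$ be the $(n+1)\times(n+1)$ distance matrix of the points $\mathbf{0},\alpha_1\mathbf{e}_1,\dots,\alpha_n\mathbf{e}_n$ (a simplex with an orthogonal corner), i.e. $D'_{ij}=\sqrt{\alpha_i^2+\alpha_j^2}$ for $i\ne j\in\{0,\dots,n\}$ with $\alpha_0=0$. Assume in each case that the off-diagonal entries are pairwise distinct. Then for every $k>0$ and all $t\in[0,1]$, the $k$-th Betti curve of $D$ (resp. $D'$) is identically zero.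
   Context: Betti curves of a symmetric matrix. Let $M$ be a real symmetric $n\times n$ matrix whose $\binom{n}{2}$ off-diagonal entries $M_{ij}$ ($i<j$) are pairwise distinct. The ordering matrix $\widehat{M}$ is defined by $\widehat{M}_{ij}=k$ if $M_{ij}$ is the $k$-th smallest off-diagonal entry. For $t\in[0,1]$, $G_t=G_t(M)$ is the graph on vertex set $\{1,\dots,n\}$ with edge set $\{\{i,j\} : \widehat{M}_{ij}\le t\binom{n}{2}\}$ (so edges are added in increasing order of the entries $M_{ij}$; $G_0$ has no edges and $G_1$ is complete). $X(G_t)$ is the clique complex of $G_t$ (every $k$-clique of $G_t$ is filled in by a $(k-1)$-dimensional simplex). The $i$-th Betti curve of $M$ is $\beta_i(t)=\operatorname{rank} H_i(X(G_t);\mathbf{k})$, with $H_i$ simplicial homology with coefficients in a fixed field $\mathbf{k}$. $\mathbf{e}_1,\dots,\mathbf{e}_n$ denote the standard basis vectors of $\mathbb{R}^n$. *)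

From HB Require Import structures.
From mathcomp Require Import all_boot all_order all_algebra.
From mathcomp Require Import reals.
Set Implicit Arguments. Unset Strict Implicit. Unset Printing Implicit Defensive.
Import Order.TTheory GRing.Theory Num.Theory.
Local Open Scope ring_scope.

Definition simplices (m : nat) (E : rel 'I_m) (k : nat) : {set {set 'I_m}} :=
  [set s : {set 'I_m} | (#|s| == k.+1)%N &&
     [forall x in s, forall y in s, (x != y) ==> E x y]].

(* Coefficient of the face t in the boundary of the simplex s, with vertices
   oriented by the natural order of 'I_m:  d[v_0..v_k] = sum_i (-1)^i [..^v_i..]. *)
Definition bd_coef (F : pzRingType) (m : nat) (s t : {set 'I_m}) : F :=
  \sum_(v in s | t == s :\ v) (-1) ^+ #|[set u in s | (val u < val v)%N]|.

(* Matrix of the boundary map d_{k+1} : C_{k+1} -> C_k (row-vector convention: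
   rows indexed by (k+1)-simplices, columns by k-simplices). *)
Definition bdmx (F : fieldType) (m : nat) (E : rel 'I_m) (k : nat)
  : 'M[F]_(#|simplices E k.+1|, #|simplices E k|) :=
  \matrix_(i, j) bd_coef F (enum_val i) (enum_val j).

(* rank H_k(X(G); F) = dim C_k - rank d_k - rank d_{k+1}  (d_0 = 0). *)
Definition betti (F : fieldType) (m : nat) (E : rel 'I_m) (k : nat) : nat :=
  (#|simplices E k| - \rank (bdmx F E k)
     - (if k is k'.+1 then \rank (bdmx F E k') else 0))%N.

Section Curves.
Variable R : realType.

Definition ordhat (m : nat) (M : 'M[R]_m) (i j : 'I_m) : nat :=
  (#|[set p : 'I_m * 'I_m | (val p.1 < val p.2)%N && (M p.1 p.2 < M i j)]|).+1.

Definition Gt (m : nat) (M : 'M[R]_m) (t : R) : rel 'I_m :=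
  fun i j => (i != j) && ((ordhat M i j)%:R <= t * ('C(m, 2))%:R).

Definition betti_curve (F : fieldType) (m : nat) (M : 'M[R]_m) (k : nat) (t : R) : nat :=
  betti F (Gt M t) k.

Definition offdiag_distinct (m : nat) (M : 'M[R]_m) : Prop :=
  forall i j i' j' : 'I_m, (val i < val j)%N -> (val i' < val j')%N ->
    M i j = M i' j' -> i = i' /\ j = j'.

Definition edm (m d : nat) (p : 'I_m -> 'rV[R]_d) : 'M[R]_m :=
  \matrix_(i, j) Num.sqrt (\sum_(l < d) (p i 0 l - p j 0 l) ^+ 2).

Definition axis_pts (n : nat) (alpha : 'I_n -> R) (i : 'I_n) : 'rV[R]_n :=
  alpha i *: delta_mx 0 i.

Definition corner_pts (n : nat) (alpha : 'I_n -> R) (i : 'I_n.+1) : 'rV[R]_n :=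
  match unlift ord0 i with Some j => axis_pts alpha j | None => 0 end.

End Curves.

From HB Require Import structures.
From mathcomp Require Import all_boot all_order all_algebra.
From mathcomp Require Import reals ring.
Import Order.TTheory GRing.Theory Num.Theory.
Local Open Scope ring_scope.
Set Implicit Arguments. Unset Strict Implicit. Unset Printing Implicit Defensive.

(* In G_t, a vertex v minimising |alpha_v| is a cone point: if {y, z} is an
   edge with y, z <> v, then d(v, y) = sqrt(alpha_v^2 + alpha_y^2) is at most
   d(y, z), so {v, y} was added earlier. The clique complex is then a cone with
   apex v, and h(s) = (-1)^#{u in s | u < v} (v :: s) (zero when v is in s)
   satisfies h d + d h = id on chains of every positive degree. *)

Section Boundary.
Variables (F : fieldType) (m : nat).
Implicit Types (s r A : {set 'I_m}) (v w x y : 'I_m).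

Definition nbelow A y : nat := #|[set u in A | (val u < val y)%N]|.

Lemma nbelowU1 A x y : x \notin A ->
  nbelow (x |: A) y = (nbelow A y + (val x < val y))%N.
Proof.
move=> xA; rewrite /nbelow; case: ltnP => [xy|yx].
  have -> : [set u in x |: A | (val u < val y)%N] = x |: [set u in A | (val u < val y)%N].
    by apply/setP => u; rewrite !inE; case: eqVneq => // ->; rewrite xy.
  by rewrite cardsU1 inE (negPf xA) addnC.
rewrite addn0; apply: eq_card => u; rewrite !inE.
by case: eqVneq => [->|]; rewrite /= ?ltnNge ?yx ?andbF.
Qed.

Lemma nbelowD1 A y : nbelow (A :\ y) y = nbelow A y.
Proof.
by apply: eq_card => u; rewrite !inE; case: eqVneq => [->|]; rewrite ?ltnn ?andbF.
Qed.

Lemma bd_coef_facet s w : w \in s -> bd_coef F s (s :\ w) = (-1) ^+ nbelow s w.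
Proof.
move=> ws; rewrite /bd_coef (big_pred1 w) // => u /=.
apply/andP/eqP => [[us /eqP e]|->]; last by rewrite ws.
apply/eqP/negPn/negP => nuw.
have : w \in s :\ u by rewrite !inE eq_sym nuw ws.
by rewrite -e !inE eqxx.
Qed.

Lemma bd_coef_eq0 s r : (forall w, w \in s -> r != s :\ w) -> bd_coef F s r = 0.
Proof.
move=> nfacet; rewrite /bd_coef big_pred0 // => u; apply/andP => -[us /eqP e].
by move: (nfacet u us); rewrite e eqxx.
Qed.

Lemma setU1D1 A v w : w != v -> (v |: A) :\ w = v |: (A :\ w).
Proof.
move=> wv; apply/setP => u; rewrite !inE.
by case: (eqVneq u v) => [->|]; rewrite ?(eq_sym v) ?wv.
Qed.

Lemma signr_lt_gt v w : w != v ->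
  (-1) ^+ (val w < val v) * (-1) ^+ (val v < val w) = - 1 :> F.
Proof.
move=> wv; case: ltngtP => [||/val_inj vw]; rewrite ?mulr1 ?mul1r //.
by rewrite vw eqxx in wv.
Qed.

Lemma cone_identity_diag v s :
  (if v \in s then 0 else (-1) ^+ nbelow s v * bd_coef F (v |: s) s) +
  (if v \in s then bd_coef F s (s :\ v) * (-1) ^+ nbelow s v else 0) = 1.
Proof.
case: ifPn => vs; first by rewrite add0r bd_coef_facet // -expr2 sqrr_sign.
have := bd_coef_facet (setU11 v s); rewrite setU1K // => ->.
by rewrite addr0 nbelowU1 // ltnn addn0 -expr2 sqrr_sign.
Qed.

(* Both terms vanish unless r = (v |: s) :\ w for some w in s, and then they
   differ by the sign (-1)^([w < v] + [v < w]) = -1. *)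
Lemma cone_identity_cancel v s r : v \notin s -> v \in r ->
  (-1) ^+ nbelow s v * bd_coef F (v |: s) r +
  bd_coef F s (r :\ v) * (-1) ^+ nbelow r v = 0.
Proof.
move=> vs vr; have [/exists_inP[w ws /eqP rvE] | nfacet] :=
  boolP [exists w in s, r :\ v == s :\ w]; last first.
  have facet_r : forall w, w \in v |: s -> r != (v |: s) :\ w.
    move=> w; case/setU1P => [->|ws]; apply/eqP => rE.
      by move: vr; rewrite rE setU1K // (negPf vs).
    have wv : w != v by apply: contraNneq vs => <-.
    case/exists_inP: nfacet; exists w => //.
    by rewrite rE setU1D1 // setU1K // !inE (negPf vs) andbF.
  have facet_rv : forall w, w \in s -> r :\ v != s :\ w.
    by move=> w ws; apply: contraNneq nfacet => e; apply/exists_inP; exists w; rewrite ?e.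
  by rewrite !bd_coef_eq0 // mulr0 mul0r addr0.
have wv : w != v by apply: contraNneq vs => <-.
have rE : r = (v |: s) :\ w by rewrite setU1D1 // -rvE setD1K.
rewrite rE bd_coef_facet ?setU1r // -rE rvE bd_coef_facet //.
rewrite nbelowU1 // -(nbelowD1 r v) rvE -{1}(setD1K ws) nbelowU1 ?setD11 //.
by rewrite !exprD mulrACA signr_lt_gt // mulrN1 mulrC addNr.
Qed.

End Boundary.

Section Cone.
Variables (F : fieldType) (m : nat) (E : rel 'I_m) (v : 'I_m).
Hypothesis v_cone : forall y z, y != v -> z != v -> E y z -> E v y && E y v.
Implicit Types (s r p : {set 'I_m}).

Lemma simplicesU1 k s : s \in simplices E k.+1 -> v \notin s ->
  v |: s \in simplices E k.+2.
Proof.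
rewrite !inE => /andP[/eqP cs /forall_inP clique] vs.
rewrite cardsU1 vs cs eqxx /=.
have adj y : y \in s -> E v y && E y v.
  move=> ys; have : (1 < #|s|)%N by rewrite cs.
  rewrite (cardsD1 y) ys ltnS card_gt0 => /set0Pn[z]; rewrite !inE => /andP[zy zs].
  have notv u : u \in s -> u != v by move=> us; apply: contraNneq vs => <-.
  apply: v_cone (notv y ys) (notv z zs) _.
  by have /forall_inP/(_ z zs) := clique y ys; rewrite eq_sym zy.
apply/forall_inP => x /setU1P xs; apply/forall_inP => y /setU1P ys; apply/implyP.
case: xs ys => [-> | xs] [-> | ys]; rewrite ?eqxx // => nxy.
- by case/andP: (adj y ys).
- by case/andP: (adj x xs).
by have /forall_inP/(_ y ys)/implyP := clique x xs; apply.
Qed.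

Lemma simplicesD1 k s : s \in simplices E k.+1 -> v \in s ->
  s :\ v \in simplices E k.
Proof.
rewrite !inE => /andP[/eqP cs /forall_inP clique] vs.
rewrite (cardsD1 v) vs add1n in cs; case: cs => ->; rewrite eqxx /=.
apply/forall_inP => x /setD1P[_ xs]; apply/forall_inP => y /setD1P[_ ys].
exact: (forall_inP (clique x xs)).
Qed.

Definition cone_coef s p : F :=
  if (v \notin s) && (p == v |: s) then (-1) ^+ nbelow s v else 0.

Definition conemx k : 'M[F]_(#|simplices E k|, #|simplices E k.+1|) :=
  \matrix_(i, j) cone_coef (enum_val i) (enum_val j).

Lemma cone_bd_sum k s r : s \in simplices E k.+1 ->
  \sum_(p in simplices E k.+2) cone_coef s p * bd_coef F p r =
  if v \in s then 0 else (-1) ^+ nbelow s v * bd_coef F (v |: s) r.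
Proof.
rewrite /cone_coef => sS; case: ifPn => vs /=.
  by rewrite big1 // => p _; rewrite mul0r.
rewrite (big_only1 (v |: s)) ?simplicesU1 ?eqxx // => p /negPf-> _.
by rewrite mul0r.
Qed.

Lemma bd_cone_sum k s r : r \in simplices E k.+1 ->
  \sum_(p in simplices E k) bd_coef F s p * cone_coef p r =
  if v \in r then bd_coef F s (r :\ v) * (-1) ^+ nbelow r v else 0.
Proof.
rewrite /cone_coef => rS; case: ifPn => vr.
  rewrite (big_only1 (r :\ v)) ?simplicesD1 // ?setD11 ?setD1K ?eqxx ?nbelowD1 //.
  move=> p prv _; case: ifP; rewrite ?mulr0 // => /andP[vp /eqP rE].
  by move: prv; rewrite rE setU1K // eqxx.
rewrite big1 // => p _; case: ifP; rewrite ?mulr0 // => /andP[_ /eqP rE].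
by move: vr; rewrite rE setU11.
Qed.

(* The entry (s, r) of [h d + d h]; it needs no clique condition on s, r. *)
Lemma cone_identity s r :
  (if v \in s then 0 else (-1) ^+ nbelow s v * bd_coef F (v |: s) r) +
  (if v \in r then bd_coef F s (r :\ v) * (-1) ^+ nbelow r v else 0) =
  (s == r)%:R.
Proof.
have [<-|nsr] := eqVneq s r; first exact: cone_identity_diag.
case: ifPn => vs; case: ifPn => vr; rewrite ?addr0 ?add0r.
- rewrite bd_coef_eq0 ?mul0r // => w ws; apply/eqP => rsE.
  have [wv|wv] := eqVneq w v.
    by move: nsr; rewrite -(setD1K vs) -(setD1K vr) rsE wv eqxx.
  have : v \in s :\ w by rewrite !inE eq_sym wv vs.
  by rewrite -rsE setD11.
- by [].
- exact: cone_identity_cancel.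
rewrite bd_coef_eq0 ?mulr0 // => w /setU1P[->|ws]; apply/eqP => rE.
  by move: nsr; rewrite rE setU1K // eqxx.
have wv : w != v by apply: contraNneq vs => <-.
by move: vr; rewrite rE !inE eqxx eq_sym wv.
Qed.

Lemma cone_homotopy k :
  conemx k.+1 *m bdmx F E k.+1 + bdmx F E k *m conemx k = 1%:M.
Proof.
apply/matrixP => i j; rewrite !mxE.
under eq_bigr do rewrite !mxE.
under [X in _ + X = _]eq_bigr do rewrite !mxE.
rewrite -(big_enum_val (fun p => cone_coef (enum_val i) p * bd_coef F p (enum_val j))).
rewrite -(big_enum_val (fun p => bd_coef F (enum_val i) p * cone_coef p (enum_val j))).
rewrite cone_bd_sum ?bd_cone_sum ?enum_valP // cone_identity.
by rewrite (inj_eq enum_val_inj).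
Qed.

Lemma betti_cone_eq0 k : (0 < k)%N -> betti F E k = 0%N.
Proof.
case: k => // k _; apply/eqP; rewrite /betti -subnDA subn_eq0.
have := mxrank_add (conemx k.+1 *m bdmx F E k.+1) (bdmx F E k *m conemx k).
rewrite cone_homotopy mxrank1 => /leq_trans; apply.
by rewrite leq_add ?mxrankM_maxr ?mxrankM_maxl.
Qed.

End Cone.

Section Filtration.
Variable R : realType.

Definition cone_point (m : nat) (M : 'M[R]_m) (v : 'I_m) : Prop :=
  forall y z, y != v -> z != v -> y != z -> M v y <= M y z /\ M y v <= M y z.

Lemma ordhat_le m (M : 'M[R]_m) i j i' j' :
  M i j <= M i' j' -> (ordhat M i j <= ordhat M i' j')%N.
Proof.
move=> le_ij; rewrite ltnS; apply/subset_leq_card/subsetP => q.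
by rewrite !inE => /andP[-> /lt_le_trans->].
Qed.

Lemma Gt_cone m (M : 'M[R]_m) v t : cone_point M v ->
  forall y z, y != v -> z != v -> Gt M t y z -> Gt M t v y && Gt M t y v.
Proof.
move=> vM y z yv zv /andP[yz yz_t]; have [vy yv'] := vM y z yv zv yz.
rewrite /Gt eq_sym yv /=.
by rewrite !(le_trans _ yz_t) // ler_nat ordhat_le.
Qed.

Lemma betti_curve_cone_point (F : fieldType) m (M : 'M[R]_m) v k t :
  cone_point M v -> (0 < k)%N -> betti_curve F M k t = 0%N.
Proof. by move=> vM k0; exact: (betti_cone_eq0 F (Gt_cone (t := t) vM) k0). Qed.

End Filtration.

Section CoordinatePoints.
Variables (R : realType) (m d : nat) (a : 'I_m -> R) (g : 'I_m -> 'I_d).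
Variable p : 'I_m -> 'rV[R]_d.
Hypothesis pE : forall i, p i = a i *: delta_mx 0 (g i).
Hypothesis disjoint_support :
  forall i j, i != j -> [|| g i != g j, a i == 0 | a j == 0].

Lemma edm_coord i j : i != j -> edm p i j = Num.sqrt (a i ^+ 2 + a j ^+ 2).
Proof.
move=> ij; rewrite mxE; congr Num.sqrt.
transitivity (\sum_(l < d)
  ((if l == g i then a i ^+ 2 else 0) + (if l == g j then a j ^+ 2 else 0))).
  apply: eq_bigr => l _; rewrite !pE !mxE /=.
  case: (eqVneq l (g i)) => [li|nli]; case: (eqVneq l (g j)) => [lj|nlj] /=;
    try ring.
  by move: (disjoint_support ij); rewrite -li -lj eqxx /= => /orP[] /eqP ->; ring.
by rewrite big_split /= -!big_mkcond /= !big_pred1_eq.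
Qed.

Lemma edm_cone_point v : (forall i, a v ^+ 2 <= a i ^+ 2) -> cone_point (edm p) v.
Proof.
move=> vmin y z yv zv yz; have vy : v != y by rewrite eq_sym.
rewrite !edm_coord // !ler_sqrt ?addr_ge0 ?sqr_ge0 // addrC !lerD2l.
by split; apply: vmin.
Qed.

Lemma betti_curve_edm_coord (F : fieldType) k t :
  (0 < m)%N -> (0 < k)%N -> betti_curve F (edm p) k t = 0%N.
Proof.
move=> m_gt0; pose i0 := Ordinal m_gt0.
have [v _ vmin] := arg_minP (fun i => a i ^+ 2) (isT : xpredT i0).
apply: betti_curve_cone_point (edm_cone_point (v := v) _) => i.
exact: vmin.
Qed.

End CoordinatePoints.

Theorem mainTheorem3 (R : realType) (F : fieldType) (n : nat) (alpha : 'I_n -> R) :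
  (2 <= n)%N ->
  (offdiag_distinct (edm (axis_pts alpha)) ->
     forall (k : nat) (t : R), (0 < k)%N -> 0 <= t <= 1 ->
       betti_curve F (edm (axis_pts alpha)) k t = 0%N) /\
  (offdiag_distinct (edm (corner_pts alpha)) ->
     forall (k : nat) (t : R), (0 < k)%N -> 0 <= t <= 1 ->
       betti_curve F (edm (corner_pts alpha)) k t = 0%N).
Proof.
move=> n_ge2; have n_gt0 : (0 < n)%N by apply: leq_trans n_ge2.
split=> _ k t k_gt0 _.
  by apply: (betti_curve_edm_coord (g := id)) => // i j ->.
pose a i := oapp alpha 0 (unlift ord0 i).
pose g i := oapp id (Ordinal n_gt0) (unlift ord0 i).
apply: (betti_curve_edm_coord (a := a) (g := g)) => // [i|i j].
  by rewrite /corner_pts /a /g; case: unlift => //=; rewrite scale0r.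
rewrite /a /g; case: (unliftP ord0 i) => [i' ->|->]; case: (unliftP ord0 j) => [j' ->|->] /=.
- by rewrite (inj_eq lift_inj) => ->.
- by rewrite eqxx !orbT.
- by rewrite eqxx !orbT.
- by rewrite eqxx.
Qed.
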